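(* Let $n\ge 1$, $d\ge r\ge 1$, let $\mathrm{St}(d,r)=\{x\in\mathbb{R}^{d\times r}: x^\top x=I_r\}$ with tangent spaces $\mathrm{T}_x\mathcal{M}=\{\xi\in\mathbb{R}^{d\times r}: x^\top\xi+\xi^\top x=0\}$, and let $W\in\mathbb{R}^{n\times n}$ be a symmetric, nonnegative, doubly stochastic matrix and $t\ge 1$ an integer. Let $\mathcal{R}$ be a retraction on $\mathrm{St}(d,r)$ and $M>0$ a constant such that $\|\mathcal{R}_x(\xi)-(x+\xi)\|_F\le M\|\xi\|_F^2$ for all $x\in\mathrm{St}(d,r)$, $\xi\in \mathrm{T}_x\mathcal{M}$. Let $\delta_1,\delta_2>0$ satisfy $\delta_1\le \frac{1}{5\sqrt r}\delta_2$ and $\delta_2\le \frac16$. Suppose $\mathbf{x}_k=(x_{1,k},\dots,x_{n,k})\in\mathcal{N}$ and $\mathbf{x}_{k+1}=(x_{1,k+1},\dots,x_{n,k+1})\in\mathcal{N}_1$, where for each $i\in[n]$ $$x_{i,k+1}=\mathcal{R}_{x_{i,k}}\big(-\alpha\,\mathrm{grad}\,\varphi_i^t(\mathbf{x}_k)+\beta u_{i,k}\big),$$ with $u_{i,k}\in\mathrm{T}_{x_{i,k}}\mathcal{M}$, $0\le\alpha\le \frac1M$ and $\beta\ge 0$. Let $\mathbf{u}_k=(u_{1,k},\dots,u_{n,k})$ and $\hat u_k=\frac1n\sum_{i=1}^n u_{i,k}$. Then $$\|\bar x_k-\bar x_{k+1}\|_F\le \frac{1}{1-2\delta_1^2}\left(\frac{2L_t^2\alpha+L_t\alpha}{n}\|\mathbf{x}_k-\bar{\mathbf{x}}_k\|_F^2+\beta\|\hat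 u_k\|_F+\frac{2M\beta^2}{n}\|\mathbf{u}_k\|_F^2\right),$$ where $\bar x_k,\bar x_{k+1}$ are the induced arithmetic means of $\mathbf{x}_k$, $\mathbf{x}_{k+1}$ and $\bar{\mathbf{x}}_k=(\bar x_k,\dots,\bar x_k)$.
   Context: For $\mathbf{x}=(x_1,\dots,x_n)\in\mathrm{St}(d,r)^n$, $\|\mathbf{x}\|_F^2=\sum_i\|x_i\|_F^2$. The induced arithmetic mean (IAM) is $\bar x\in\arg\min_{y\in\mathrm{St}(d,r)}\sum_{i=1}^n\|y-x_i\|_F^2$, and $\bar{\mathbf{x}}=(\bar x,\dots,\bar x)$. The consensus function is $\varphi^t(\mathbf{x})=\frac14\sum_{i,j=1}^n W^t_{ij}\|x_i-x_j\|_F^2$, where $W^t_{ij}$ is the $(i,j)$ entry of the matrix power $W^t$; its Riemannian gradient has blocks $\mathrm{grad}\,\varphi^t_i(\mathbf{x})=\mathcal{P}_{\mathrm{T}_{x_i}\mathcal{M}}\big(x_i-\sum_{j=1}^n W^t_{ij}x_j\big)$, where $\mathcal{P}_{\mathrm{T}_{x}\mathcal{M}}(y)=y-\frac12 x(x^\top y+y^\top x)$. The constant $L_t=1-\lambda_n(W^t)$, with $\lambda_n(W^t)$ the smallest eigenvalue of $W^t$. The neighborhoods are $\mathcal{N}_1=\{\mathbf{x}\in\mathrm{St}(d,r)^n:\|\mathbf{x}-\bar{\mathbf{x}}\|_F^2\le n\delta_1^2\}$, $\mathcal{N}_2=\{\mathbf{x}\in\mathrm{St}(d,r)^n:\max_{i\in[n]}\|x_i-\bar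 x\|_F\le\delta_2\}$, and $\mathcal{N}=\mathcal{N}_1\cap\mathcal{N}_2$. *)

From HB Require Import structures.
From mathcomp Require Import all_boot all_order all_algebra.
From mathcomp Require Import reals.
Set Implicit Arguments. Unset Strict Implicit. Unset Printing Implicit Defensive.
Import Order.TTheory GRing.Theory Num.Theory.
Local Open Scope ring_scope.

Section Defs.
Variable R : realType.

Definition frob2 {m p : nat} (A : 'M[R]_(m, p)) : R :=
  \sum_(i < m) \sum_(j < p) A i j ^+ 2.
Definition frob {m p : nat} (A : 'M[R]_(m, p)) : R := Num.sqrt (frob2 A).

Definition stiefel {d r : nat} (x : 'M[R]_(d, r)) : Prop := x^T *m x = 1%:M.

Definition tangent {d r : nat} (x xi : 'M[R]_(d, r)) : Prop :=
  x^T *m xi + xi^T *m x = 0.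

Definition projT {d r : nat} (x y : 'M[R]_(d, r)) : 'M[R]_(d, r) :=
  y - (2%:R^-1) *: (x *m (x^T *m y + y^T *m x)).

(* retraction on St(d,r): maps the tangent bundle into St, R_x(0) = x, and
   its differential at 0 is the identity (first-order agreement with x + xi,
   stated in epsilon-delta form). *)
Definition retraction {d r : nat} (Rt : 'M[R]_(d, r) -> 'M[R]_(d, r) -> 'M[R]_(d, r)) : Prop :=
  forall x, stiefel x ->
    [/\ forall xi, tangent x xi -> stiefel (Rt x xi),
        Rt x 0 = x &
        forall eps : R, 0 < eps -> exists2 del : R, 0 < del &
          forall xi, tangent x xi -> frob xi < del ->
            frob (Rt x xi - (x + xi)) <= eps * frob xi].

Definition mxpow {n : nat} (W : 'M[R]_n) (t : nat) : 'M[R]_n :=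
  iter t (fun A => W *m A) 1%:M.

Definition min_eigenvalue {n : nat} (A : 'M[R]_n) (lam : R) : Prop :=
  eigenvalue A lam /\ forall mu, eigenvalue A mu -> lam <= mu.

Definition Lconst (lam : R) : R := 1 - lam.

Definition grad_phi {n d r : nat} (W : 'M[R]_n) (t : nat)
  (x : 'I_n -> 'M[R]_(d, r)) (i : 'I_n) : 'M[R]_(d, r) :=
  projT (x i) (x i - \sum_(j < n) mxpow W t i j *: x j).

Definition dist2 {n d r : nat} (x : 'I_n -> 'M[R]_(d, r)) (y : 'M[R]_(d, r)) : R :=
  \sum_(i < n) frob2 (x i - y).

Definition is_IAM {n d r : nat} (x : 'I_n -> 'M[R]_(d, r)) (y : 'M[R]_(d, r)) : Prop :=
  stiefel y /\ forall z, stiefel z -> dist2 x y <= dist2 x z.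

Definition inN1 {n d r : nat} (delta1 : R) (x : 'I_n -> 'M[R]_(d, r)) (xb : 'M[R]_(d, r)) : Prop :=
  (forall i, stiefel (x i)) /\ dist2 x xb <= n%:R * delta1 ^+ 2.
Definition inN2 {n d r : nat} (delta2 : R) (x : 'I_n -> 'M[R]_(d, r)) (xb : 'M[R]_(d, r)) : Prop :=
  (forall i, stiefel (x i)) /\ forall i, frob (x i - xb) <= delta2.
Definition inN {n d r : nat} (delta1 delta2 : R) (x : 'I_n -> 'M[R]_(d, r)) (xb : 'M[R]_(d, r)) : Prop :=
  inN1 delta1 x xb /\ inN2 delta2 x xb.

Definition sym_doubly_stochastic {n : nat} (W : 'M[R]_n) : Prop :=
  [/\ W^T = W, forall i j, 0 <= W i j,
      forall i, \sum_(j < n) W i j = 1 & forall j, \sum_(i < n) W i j = 1].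

End Defs.

(* Both induced arithmetic means maximize the linear function [z |-> <sum_i x_i, z>] over the
   Stiefel manifold.  Moving along the retraction shows that at a maximizer [y] the projection
   of [s = sum_i x_i] onto the tangent space vanishes, i.e. [s = y P] with [P] symmetric; then
   [2 <s, y - y'>] is the quadratic form [tr ((y - y') P (y - y')^T)], which is at least
   [(n - |x - ybar|^2 / 2) |y - y'|^2] for every [y'] on the manifold.  Adding this inequality at
   the two consecutive iterates bounds [|xbar_k - xbar_(k+1)|] by the change of the sums
   [|sum_i (x_(i,k) - x_(i,k+1))|], which the second-order bound on the retraction splits into
   the summed gradients, the summed directions [u_i] and quadratic remainders.  With
   [L = 1 - lambda_n(W^t)] the gradients satisfy [sum_i |grad_i|^2 <= L^2 |x - xbar|^2]
   (Rayleigh quotient) and [|sum_i grad_i| <= L |x - xbar|^2]: the differences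
   [x_i - sum_j W^t_ij x_j] sum to zero, and the normal corrections are quadratic in [x - xbar]. *)

From HB Require Import structures.
From mathcomp Require Import all_boot all_order all_algebra.
From mathcomp Require Import reals classical_sets.
From mathcomp Require Import ring lra.
Set Implicit Arguments. Unset Strict Implicit. Unset Printing Implicit Defensive.
Import Order.TTheory GRing.Theory Num.Theory.
Local Open Scope ring_scope.

Section FrobeniusInnerProduct.
Variables (R : realType) (m p : nat).
Implicit Types A B C : 'M[R]_(m, p).

Definition mxdot A B : R := \tr (A^T *m B).

Lemma mxdotC A B : mxdot A B = mxdot B A.
Proof. by rewrite /mxdot -mxtrace_tr trmx_mul trmxK. Qed.

Lemma mxdotDl A B C : mxdot (A + B) C = mxdot A C + mxdot B C.
Proof. by rewrite /mxdot linearD /= mulmxDl mxtraceD. Qed.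

Lemma mxdotDr A B C : mxdot C (A + B) = mxdot C A + mxdot C B.
Proof. by rewrite /mxdot mulmxDr mxtraceD. Qed.

Lemma mxdotZl c A B : mxdot (c *: A) B = c * mxdot A B.
Proof. by rewrite /mxdot linearZ /= -scalemxAl mxtraceZ. Qed.

Lemma mxdotZr c A B : mxdot A (c *: B) = c * mxdot A B.
Proof. by rewrite /mxdot -scalemxAr mxtraceZ. Qed.

Lemma mxdotNl A B : mxdot (- A) B = - mxdot A B.
Proof. by rewrite -scaleN1r mxdotZl mulN1r. Qed.

Lemma mxdotNr A B : mxdot A (- B) = - mxdot A B.
Proof. by rewrite -scaleN1r mxdotZr mulN1r. Qed.

Lemma mxdotBl A B C : mxdot (A - B) C = mxdot A C - mxdot B C.
Proof. by rewrite mxdotDl mxdotNl. Qed.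

Lemma mxdotBr A B C : mxdot C (A - B) = mxdot C A - mxdot C B.
Proof. by rewrite mxdotDr mxdotNr. Qed.

Lemma mxdot0l A : mxdot 0 A = 0.
Proof. by rewrite /mxdot linear0 mul0mx mxtrace0. Qed.

Lemma mxdot0r A : mxdot A 0 = 0.
Proof. by rewrite mxdotC mxdot0l. Qed.

Lemma mxdot_suml k (F : 'I_k -> 'M[R]_(m, p)) B :
  mxdot (\sum_(i < k) F i) B = \sum_(i < k) mxdot (F i) B.
Proof. by elim/big_rec2: _ => [|i y A _ <-]; rewrite ?mxdot0l ?mxdotDl. Qed.

Lemma mxdotE A B : mxdot A B = \sum_(i < m) \sum_(j < p) A i j * B i j.
Proof.
rewrite /mxdot /mxtrace exchange_big /=; apply: eq_bigr => j _.
by rewrite mxE; apply: eq_bigr => i _; rewrite mxE.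
Qed.

Lemma frob2E A : frob2 A = mxdot A A.
Proof. by rewrite mxdotE; apply: eq_bigr => i _; apply: eq_bigr => j _; rewrite expr2. Qed.

Lemma frob2_ge0 A : 0 <= frob2 A.
Proof. by apply: sumr_ge0 => i _; apply: sumr_ge0 => j _; exact: sqr_ge0. Qed.

Lemma frob2_eq0 A : frob2 A = 0 -> A = 0.
Proof.
move=> A0; apply/matrixP => i j; rewrite mxE; apply/eqP; rewrite -sqrf_eq0 eq_le sqr_ge0 andbT.
rewrite -A0 /frob2 (bigD1 i) //= (bigD1 j) //= -addrA lerDl.
apply: addr_ge0; first by apply: sumr_ge0 => k _; exact: sqr_ge0.
by apply: sumr_ge0 => k _; apply: sumr_ge0 => l _; exact: sqr_ge0.
Qed.

Lemma frob2N A : frob2 (- A) = frob2 A.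
Proof. by rewrite !frob2E mxdotNl mxdotNr opprK. Qed.

Lemma frob2Z c A : frob2 (c *: A) = c ^+ 2 * frob2 A.
Proof. by rewrite !frob2E mxdotZl mxdotZr mulrA expr2. Qed.

Lemma frob2D A B : frob2 (A + B) = frob2 A + 2 * mxdot A B + frob2 B.
Proof. rewrite !frob2E mxdotDl !mxdotDr (mxdotC B A); ring. Qed.

Lemma frob2D_le A B : frob2 (A + B) <= 2 * frob2 A + 2 * frob2 B.
Proof.
have := frob2_ge0 (A - B); rewrite frob2D frob2N mxdotNr frob2D.
by have := frob2_ge0 A; have := frob2_ge0 B; lra.
Qed.

Lemma frob_ge0 A : 0 <= frob A.
Proof. exact: sqrtr_ge0. Qed.

Lemma sqr_frob A : frob A ^+ 2 = frob2 A.
Proof. by rewrite /frob sqr_sqrtr // frob2_ge0. Qed.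

Lemma frob_eq0 A : frob A = 0 -> A = 0.
Proof. by move=> A0; apply: frob2_eq0; rewrite -sqr_frob A0 expr0n. Qed.

Lemma frob_le A c : 0 <= c -> frob2 A <= c ^+ 2 -> frob A <= c.
Proof. by move=> c0 h; rewrite -(ger0_norm c0) -sqrtr_sqr ler_sqrt // sqr_ge0. Qed.

Lemma frobN A : frob (- A) = frob A.
Proof. by rewrite /frob frob2N. Qed.

Lemma frobZ c A : frob (c *: A) = `|c| * frob A.
Proof. by rewrite /frob frob2Z sqrtrM ?sqr_ge0 // sqrtr_sqr. Qed.

Lemma mxdot_le_frob A B : mxdot A B <= frob A * frob B.
Proof.
have [a0|na] := eqVneq (frob A) 0; first by rewrite a0 (frob_eq0 a0) mxdot0l mul0r.
have [b0|nb] := eqVneq (frob B) 0; first by rewrite b0 (frob_eq0 b0) mxdot0r mulr0.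
have ab0 : 0 < frob A * frob B by rewrite mulr_gt0 // lt_def ?na ?nb frob_ge0.
have := frob2_ge0 (frob B *: A - frob A *: B).
rewrite frob2D frob2N !frob2Z mxdotNr mxdotZl mxdotZr -!sqr_frob; nra.
Qed.

Lemma norm_mxdot_le A B : `|mxdot A B| <= frob A * frob B.
Proof.
rewrite ler_norml mxdot_le_frob andbT lerNl -mxdotNl.
by apply: le_trans (mxdot_le_frob _ _) _; rewrite frobN.
Qed.

Lemma frobD_le A B : frob (A + B) <= frob A + frob B.
Proof.
apply: frob_le; first by rewrite addr_ge0 ?frob_ge0.
by rewrite frob2D -!sqr_frob; have := mxdot_le_frob A B; lra.
Qed.

Lemma frob_sum_le k (F : 'I_k -> 'M[R]_(m, p)) :
  frob (\sum_(i < k) F i) <= \sum_(i < k) frob (F i).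
Proof.
elim/big_rec2: _ => [|i y A _ le_Ay]; last exact: le_trans (frobD_le _ _) (lerD _ le_Ay).
by rewrite /frob /frob2 big1 ?sqrtr0 // => i _; rewrite big1 // => j _; rewrite mxE expr0n.
Qed.

End FrobeniusInnerProduct.

Lemma frob2_tr (R : realType) m p (A : 'M[R]_(m, p)) : frob2 A^T = frob2 A.
Proof. by rewrite !frob2E /mxdot trmxK mxtrace_mulC. Qed.

Lemma frob_tr (R : realType) m p (A : 'M[R]_(m, p)) : frob A^T = frob A.
Proof. by rewrite /frob frob2_tr. Qed.

Lemma sum_mul_sqr_le (R : realType) k (u v : 'I_k -> R) :
  (\sum_(j < k) u j * v j) ^+ 2 <= (\sum_(j < k) u j ^+ 2) * (\sum_(j < k) v j ^+ 2).
Proof.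
have colE (w z : 'I_k -> R) : mxdot (\col_j w j) (\col_j z j) = \sum_(j < k) w j * z j.
  by rewrite mxdotE; apply: eq_bigr => j _; rewrite big_ord1 !mxE.
have frob2_col (w : 'I_k -> R) : frob2 (\col_j w j) = \sum_(j < k) w j ^+ 2.
  by rewrite frob2E colE; apply: eq_bigr => j _; rewrite expr2.
rewrite -colE -!frob2_col -!sqr_frob -exprMn -real_normK ?num_real //.
by rewrite lerXn2r ?nnegrE ?normr_ge0 ?mulr_ge0 ?frob_ge0 ?norm_mxdot_le.
Qed.

Lemma frob2_mul_le (R : realType) m p q (A : 'M[R]_(m, p)) (B : 'M[R]_(p, q)) :
  frob2 (A *m B) <= frob2 A * frob2 B.
Proof.
rewrite /frob2 big_distrl /=; apply: ler_sum => i _.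
rewrite (exchange_big _ _ _ _ _ (fun j k => B j k ^+ 2)) /= big_distrr /=.
by apply: ler_sum => k _; rewrite mxE; exact: sum_mul_sqr_le.
Qed.

Lemma frob_mul_le (R : realType) m p q (A : 'M[R]_(m, p)) (B : 'M[R]_(p, q)) :
  frob (A *m B) <= frob A * frob B.
Proof. by rewrite frob_le ?mulr_ge0 ?frob_ge0 // exprMn !sqr_frob frob2_mul_le. Qed.

Lemma mxdot_mulmx_adj (R : realType) n p (B : 'M[R]_n) (X Y : 'M[R]_(n, p)) :
  mxdot X (B *m Y) = mxdot (B^T *m X) Y.
Proof. by rewrite /mxdot trmx_mul trmxK mulmxA. Qed.

Lemma mxtrace_sym_skew (R : realType) n (S K : 'M[R]_n) :
  S^T = S -> K^T = - K -> \tr (S *m K) = 0.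
Proof.
move=> ST KT; have : \tr (S *m K) = - \tr (S *m K).
  by rewrite -{1}mxtrace_tr trmx_mul KT ST mulNmx raddfN /= mxtrace_mulC.
lra.
Qed.

Section StiefelTangentSpace.
Variables (R : realType) (d r : nat).
Implicit Types x y z xi v : 'M[R]_(d, r).

Lemma stiefel_frob2 x : stiefel x -> frob2 x = r%:R.
Proof. by rewrite frob2E /stiefel /mxdot => ->; rewrite mxtrace1. Qed.

Lemma mxdot_stiefel_mul q x (S T : 'M[R]_(r, q)) :
  stiefel x -> mxdot (x *m S) (x *m T) = mxdot S T.
Proof. by rewrite /stiefel /mxdot trmx_mul => xTx; rewrite -mulmxA (mulmxA x^T) xTx mul1mx. Qed.

Lemma frob_stiefel_mul q x (S : 'M[R]_(r, q)) : stiefel x -> frob (x *m S) = frob S.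
Proof. by move=> stx; rewrite /frob !frob2E mxdot_stiefel_mul. Qed.

Lemma stiefel_gram_sub x z : stiefel x -> stiefel z ->
  (x - z)^T *m (x - z) = x^T *m (x - z) + (x - z)^T *m x.
Proof. by rewrite /stiefel => xTx zTz; rewrite !linearB /= !mulmxBl xTx zTz opprB addrC. Qed.

Lemma trmx_sym_part x v : (x^T *m v + v^T *m x)^T = x^T *m v + v^T *m x.
Proof. by rewrite linearD /= !trmx_mul !trmxK addrC. Qed.

Lemma tangentZ x xi c : tangent x xi -> tangent x (c *: xi).
Proof. by rewrite /tangent => tx; rewrite !linearZ /= -scalemxAl -scalerDr tx scaler0. Qed.

Lemma tangentD x xi zeta : tangent x xi -> tangent x zeta -> tangent x (xi + zeta).
Proof. by rewrite /tangent => tx tz; rewrite !linearD /= mulmxDl addrACA tx tz addr0. Qed.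

Lemma tangentN x xi : tangent x xi -> tangent x (- xi).
Proof. by rewrite -scaleN1r; exact: tangentZ. Qed.

Lemma tangent_projT x v : stiefel x -> tangent x (projT x v).
Proof.
rewrite /stiefel /tangent => xTx; set S := x^T *m v + v^T *m x.
have xTP : x^T *m projT x v = x^T *m v - 2^-1 *: S.
  by rewrite /projT mulmxBr -scalemxAr mulmxA xTx mul1mx.
have -> : (projT x v)^T *m x = (x^T *m projT x v)^T by rewrite trmx_mul trmxK.
have ST : (2^-1 *: S)^T = 2^-1 *: S by rewrite linearZ /= trmx_sym_part.
rewrite xTP linearB /= ST trmx_mul trmxK addrACA -opprD.
have half : 2^-1 + 2^-1 = 1 :> R by field.
by rewrite -scalerDl half scale1r subrr.
Qed.

Lemma mxdot_sym_tangent x xi (S : 'M[R]_r) :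
  S^T = S -> tangent x xi -> mxdot (x *m S) xi = 0.
Proof.
rewrite /tangent /mxdot => ST tx; rewrite trmx_mul ST -mulmxA; apply: mxtrace_sym_skew => //.
by rewrite trmx_mul trmxK; apply/eqP; rewrite -addr_eq0 addrC tx.
Qed.

Lemma mxdot_projT x v : stiefel x -> mxdot v (projT x v) = frob2 (projT x v).
Proof.
move=> stx; apply/eqP; rewrite frob2E -subr_eq0 -mxdotBl; apply/eqP.
have -> : v - projT x v = x *m (2^-1 *: (x^T *m v + v^T *m x)).
  by rewrite /projT opprB addrC subrK scalemxAr.
apply: mxdot_sym_tangent; last exact: tangent_projT.
by rewrite linearZ /= trmx_sym_part.
Qed.

Lemma frob2_projT_le x v : stiefel x -> frob2 (projT x v) <= frob2 v.
Proof.
move=> stx; have := frob2D (v - projT x v) (projT x v); rewrite subrK => ->.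
by rewrite mxdotBl mxdot_projT // -frob2E subrr mulr0 addr0 lerDr frob2_ge0.
Qed.

End StiefelTangentSpace.

Lemma projT_eq0_polar (R : realType) d r (y s : 'M[R]_(d, r)) :
  stiefel y -> projT y s = 0 -> s = y *m (y^T *m s) /\ (y^T *m s)^T = y^T *m s.
Proof.
rewrite /stiefel /projT => yTy /eqP; rewrite subr_eq0 => /eqP s_def.
have yTs : y^T *m s = 2^-1 *: (y^T *m s + s^T *m y).
  by rewrite {1}s_def -scalemxAr mulmxA yTy mul1mx.
by split; rewrite yTs; [rewrite -scalemxAr -s_def | rewrite linearZ /= trmx_sym_part].
Qed.

Lemma mxtrace_stiefel_cross_ge (R : realType) d r q
    (y x : 'M[R]_(d, r)) (Z : 'M[R]_(q, r)) :
  stiefel y -> stiefel x ->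
  frob2 Z - 2^-1 * (frob2 (x - y) * frob2 Z) <= \tr (Z *m (y^T *m x) *m Z^T).
Proof.
move=> sty stx; set Q := y^T *m (y - x).
have -> : y^T *m x = 1%:M - Q by rewrite /Q mulmxBr sty opprB addrC subrK.
rewrite mulmxBr mulmx1 mulmxBl mxtraceD raddfN /=.
have -> : \tr (Z *m Z^T) = frob2 Z by rewrite -frob2_tr frob2E /mxdot trmxK.
have QQT : 2 * \tr (Z *m Q *m Z^T) = frob2 ((y - x) *m Z^T).
  have -> : 2 * \tr (Z *m Q *m Z^T) = \tr (Z *m Q *m Z^T) + \tr (Z *m Q^T *m Z^T).
    by rewrite -[\tr (Z *m Q^T *m _)]mxtrace_tr !trmx_mul !trmxK -/Q mulmxA; ring.
  rewrite -mxtraceD -mulmxDl -mulmxDr /Q trmx_mul trmxK -stiefel_gram_sub //.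
  by rewrite frob2E /mxdot trmx_mul trmxK !mulmxA.
have := frob2_mul_le (y - x) Z^T; rewrite frob2_tr -QQT -frob2N opprB; lra.
Qed.

Section InducedArithmeticMean.
Variables (R : realType) (n d r : nat).
Implicit Types (x : 'I_n -> 'M[R]_(d, r)) (y z : 'M[R]_(d, r)).

Lemma dist2_stiefel x z : (forall i, stiefel (x i)) -> stiefel z ->
  dist2 x z = n%:R * (2 * r%:R) - 2 * mxdot (\sum_(i < n) x i) z.
Proof.
move=> stx stz; rewrite /dist2 (eq_bigr (fun i => 2 * r%:R - 2 * mxdot (x i) z)) => [|i _].
  by rewrite sumrB sumr_const card_ord -mulr_sumr mxdot_suml [n%:R * _]mulr_natl.
rewrite frob2D frob2N mxdotNr !stiefel_frob2 //; ring.
Qed.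

Lemma IAM_max_mxdot x y : (forall i, stiefel (x i)) -> is_IAM x y ->
  forall z, stiefel z -> mxdot (\sum_(i < n) x i) z <= mxdot (\sum_(i < n) x i) y.
Proof.
move=> stx [sty y_min] z stz; have := y_min z stz.
by rewrite !dist2_stiefel //; lra.
Qed.

End InducedArithmeticMean.

Section SecondOrderRetraction.
Variables (R : realType) (d r : nat) (Rt : 'M[R]_(d, r) -> 'M[R]_(d, r) -> 'M[R]_(d, r)).
Variable M : R.
Hypothesis retraction_Rt : retraction Rt.
Hypothesis M_gt0 : 0 < M.
Hypothesis Rt_second_order : forall x xi, stiefel x -> tangent x xi ->
  frob (Rt x xi - (x + xi)) <= M * frob2 xi.

Lemma projT_eq0_at_max (y s : 'M[R]_(d, r)) :
  stiefel y -> (forall z, stiefel z -> mxdot s z <= mxdot s y) -> projT y s = 0.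
Proof.
move=> sty s_max; have txi := tangent_projT s sty; have sxi := mxdot_projT s sty.
move: (projT y s) txi sxi => xi txi sxi; apply: frob2_eq0.
(* a retraction step of length h along xi cannot increase <s, .> *)
have step h : 0 < h -> h * frob2 xi <= frob s * M * h ^+ 2 * frob2 xi.
  move=> h_gt0; have thxi := tangentZ h txi; have [stRt _ _] := retraction_Rt sty.
  have := s_max _ (stRt _ thxi).
  rewrite -[Rt y _](subrK (y + h *: xi)) mxdotDr mxdotDr mxdotZr sxi.
  have := norm_mxdot_le s (Rt y (h *: xi) - (y + h *: xi)).
  have := Rt_second_order sty thxi; rewrite frob2Z.
  move: (Rt y _ - _) => e; rewrite ler_norml => le_e /andP[le_se _].
  have := ler_wpM2l (frob_ge0 s) le_e; nra.
pose h := (2 * (frob s * M + 1))^-1.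
have sM0 : 0 <= frob s * M by rewrite mulr_ge0 ?frob_ge0 ?ltW.
have h_gt0 : 0 < h by rewrite invr_gt0; lra.
have hsM : frob s * M * h <= 2^-1 by rewrite ler_pdivrMr; lra.
have := step h h_gt0; rewrite expr2 !mulrA -(mulrA _ h) (mulrC _ h) -!mulrA ler_pM2l //.
by have := frob2_ge0 xi; nra.
Qed.

(* the IAM condition makes [s = \sum_i x i] a symmetric multiple of [y], which turns
   [<s, y - y'>] into a quadratic form in [y - y'] *)
Lemma IAM_frob2_sub_le n (x : 'I_n -> 'M[R]_(d, r)) (y y' : 'M[R]_(d, r)) :
  (forall i, stiefel (x i)) -> is_IAM x y -> stiefel y' ->
  frob2 (y - y') * (n%:R - 2^-1 * dist2 x y) <= 2 * mxdot (\sum_(i < n) x i) (y - y').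
Proof.
move=> stx IAMy sty'; have sty : stiefel y by case: IAMy.
have [s_def PT] := projT_eq0_polar sty (projT_eq0_at_max sty (IAM_max_mxdot stx IAMy)).
have -> : 2 * mxdot (\sum_(i < n) x i) (y - y') =
    \tr ((y - y') *m (y^T *m \sum_(i < n) x i) *m (y - y')^T).
  rewrite mxtrace_mulC (mulmxA (y - y')^T) stiefel_gram_sub // mulmxDl mxtraceD.
  rewrite -[\tr ((y - y')^T *m y *m _)]mxtrace_tr trmx_mul PT trmx_mul trmxK mulmxA.
  rewrite /mxdot {1}s_def trmx_mul PT -(mulmxA (y^T *m (y - y'))).
  by rewrite [\tr (y^T *m (y - y') *m _)]mxtrace_mulC !mulmxA; ring.
rewrite mulmx_sumr mulmx_sumr mulmx_suml raddf_sum /=.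
apply: le_trans (ler_sum _ (fun i _ => mxtrace_stiefel_cross_ge (y - y') sty (stx i))).
rewrite sumrB sumr_const card_ord -mulr_sumr /dist2 -mulr_suml -mulr_natr; lra.
Qed.

Lemma frob_IAM_sub_le n (x x' : 'I_n -> 'M[R]_(d, r)) (y y' : 'M[R]_(d, r)) :
  (forall i, stiefel (x i)) -> (forall i, stiefel (x' i)) -> is_IAM x y -> is_IAM x' y' ->
  frob (y - y') * (2 * n%:R - 2^-1 * (dist2 x y + dist2 x' y'))
    <= 2 * frob (\sum_(i < n) x i - \sum_(i < n) x' i).
Proof.
move=> stx stx' IAMy IAMy'; have [sty _] := IAMy; have [sty' _] := IAMy'.
have le_y := IAM_frob2_sub_le stx IAMy sty'.
have := IAM_frob2_sub_le stx' IAMy' sty; rewrite -opprB frob2N mxdotNr => le_y'.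
have := mxdot_le_frob (\sum_(i < n) x i - \sum_(i < n) x' i) (y - y').
rewrite mxdotBl -sqr_frob in le_y le_y' * => cs.
have [Z0|Z_neq0] := eqVneq (frob (y - y')) 0.
  by rewrite Z0 mul0r mulr_ge0 ?frob_ge0.
have Z_gt0 : 0 < frob (y - y') by rewrite lt_def Z_neq0 frob_ge0.
have : frob (y - y') ^+ 2 * (2 * n%:R - 2^-1 * (dist2 x y + dist2 x' y'))
    <= frob (y - y') * (2 * frob (\sum_(i < n) x i - \sum_(i < n) x' i)) by lra.
by rewrite expr2 -mulrA ler_pM2l.
Qed.

End SecondOrderRetraction.

Section DoublyStochastic.
Variables (R : realType) (n : nat).
Implicit Types (W B : 'M[R]_n) (c : 'cV[R]_n).

Lemma mxpowC W t : mxpow W t *m W = W *m mxpow W t.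
Proof. by elim: t => [|t IHt] /=; rewrite ?mul1mx ?mulmx1 // -mulmxA IHt. Qed.

Lemma mxpow_sym_doubly_stochastic W t :
  sym_doubly_stochastic W -> sym_doubly_stochastic (mxpow W t).
Proof.
case=> WT W_ge0 W_row W_col; elim: t => [|t [PT P_ge0 P_row P_col]] /=.
  split=> [|i j|i|j]; rewrite ?tr_scalar_mx ?mxE ?ler0n //.
    by rewrite (bigD1 i) //= big1 => [|j /negPf]; rewrite !mxE ?eqxx ?addr0 // eq_sym => ->.
  by rewrite (bigD1 j) //= big1 => [|i /negPf]; rewrite !mxE ?eqxx ?addr0 // => ->.
split=> [|i j|i|j].
- by rewrite trmx_mul PT WT -/(mxpow W t) mxpowC.
- by rewrite mxE sumr_ge0 // => k _; rewrite mulr_ge0.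
- under eq_bigr do rewrite mxE.
  by rewrite exchange_big /=; under eq_bigr do rewrite -mulr_sumr P_row mulr1.
- under eq_bigr do rewrite mxE.
  by rewrite exchange_big /=; under eq_bigr do rewrite -mulr_suml W_col mul1r.
Qed.

Lemma dirichlet_form B c : sym_doubly_stochastic B ->
  \sum_(i < n) \sum_(j < n) B i j * (c i 0 - c j 0) ^+ 2 = 2 * (frob2 c - mxdot c (B *m c)).
Proof.
case=> _ _ B_row B_col; rewrite frob2E !mxdotE.
under [in RHS]eq_bigr do rewrite big_ord1.
under [X in _ - X]eq_bigr do rewrite big_ord1 mxE mulr_sumr.
have sum_row : \sum_(i < n) \sum_(j < n) B i j * c i 0 ^+ 2 = \sum_(i < n) c i 0 * c i 0.
  by apply: eq_bigr => i _; rewrite -mulr_suml B_row mul1r expr2.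
have sum_col : \sum_(i < n) \sum_(j < n) B i j * c j 0 ^+ 2 = \sum_(i < n) c i 0 * c i 0.
  by rewrite exchange_big; apply: eq_bigr => j _; rewrite -mulr_suml B_col mul1r expr2.
have expand : \sum_(i < n) \sum_(j < n) B i j * (c i 0 - c j 0) ^+ 2 =
    \sum_(i < n) \sum_(j < n) B i j * c i 0 ^+ 2 + \sum_(i < n) \sum_(j < n) B i j * c j 0 ^+ 2
    - 2 * \sum_(i < n) \sum_(j < n) c i 0 * (B i j * c j 0).
  rewrite mulr_sumr -!big_split -sumrB /=; apply: eq_bigr => i _.
  by rewrite !mulr_sumr -!big_split -sumrB /=; apply: eq_bigr => j _; ring.
by rewrite expand sum_row sum_col; ring.
Qed.

Lemma mxdot_doubly_stochastic_le B c :
  sym_doubly_stochastic B -> mxdot c (B *m c) <= frob2 c.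
Proof.
move=> dsB; have := dirichlet_form c dsB; case: dsB => _ B_ge0 _ _.
have : 0 <= \sum_(i < n) \sum_(j < n) B i j * (c i 0 - c j 0) ^+ 2.
  by apply: sumr_ge0 => i _; apply: sumr_ge0 => j _; rewrite mulr_ge0 ?sqr_ge0.
lra.
Qed.

Lemma norm_mxdot_mul_le p B (X : 'M[R]_(n, p)) : `|mxdot X (B *m X)| <= frob B * frob2 X.
Proof.
apply: le_trans (norm_mxdot_le _ _) _; rewrite -sqr_frob.
by have := frob_mul_le B X; have := frob_ge0 X; have := frob_ge0 (B *m X); nra.
Qed.

(* [0 <= B <= K] as quadratic forms gives [B^2 <= K B]: the quadratic
   [tau |-> <X + tau B X, B (X + tau B X)>] is nonnegative; evaluate it at [tau = -1/K]. *)
Lemma frob2_mul_psd_le p B K : B^T = B ->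
  (forall X : 'M[R]_(n, p), 0 <= mxdot X (B *m X)) ->
  (forall X : 'M[R]_(n, p), mxdot X (B *m X) <= K * frob2 X) ->
  forall X : 'M[R]_(n, p), frob2 (B *m X) <= K * mxdot X (B *m X).
Proof.
move=> BT B_ge0 B_leK X; set q := mxdot X (B *m X); set w := frob2 (B *m X).
have q_ge0 : 0 <= q by exact: B_ge0.
have w_ge0 : 0 <= w by exact: frob2_ge0.
have quad tau : 0 <= q + 2 * tau * w + tau ^+ 2 * K * w.
  have := B_ge0 (X + tau *: (B *m X)); have := B_leK (B *m X).
  rewrite mulmxDr -scalemxAr !mxdotDl !mxdotDr !mxdotZl !mxdotZr.
  rewrite (mxdotC (B *m X)) (mxdot_mulmx_adj B X (B *m X)) BT -frob2E -/q -/w.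
  by move=> le_K; have := ler_wpM2l (sqr_ge0 tau) le_K; nra.
have [K_gt0|K_le0] := ltP 0 K.
  have := quad (- K^-1).
  have -> : (- K^-1) ^+ 2 * K = K^-1 by rewrite sqrrN expr2 -mulrA mulVf ?mulr1 ?gt_eqF.
  by move=> ge0; rewrite -ler_pdivrMl // mulrC; lra.
by have := B_leK X; have := frob2_ge0 X; have := quad (-1); nra.
Qed.

Lemma frob2_const1 : frob2 (const_mx 1 : 'cV[R]_n) = n%:R.
Proof.
rewrite /frob2 (eq_bigr (fun _ => 1)) ?sumr_const ?card_ord // => i _.
by rewrite big_ord1 mxE expr1n.
Qed.

Lemma psd_unitmx_coercive B : B^T = B -> (forall c, 0 <= mxdot c (B *m c)) ->
  B \in unitmx -> exists2 K, 0 < K & forall c, frob2 c <= K * mxdot c (B *m c).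
Proof.
move=> BT B_ge0 B_unit; have B_le c : mxdot c (B *m c) <= frob B * frob2 c.
  by have := norm_mxdot_mul_le B c; rewrite ler_norml => /andP[].
have B2_le := frob2_mul_psd_le BT B_ge0 B_le.
exists (frob2 (invmx B) * frob B + 1) => [|c].
  by have := frob2_ge0 (invmx B); have := frob_ge0 B; nra.
have := frob2_mul_le (invmx B) (B *m c); rewrite mulKmx //.
have := ler_wpM2l (frob2_ge0 (invmx B)) (B2_le c).
by have := B_ge0 c; have := frob2_ge0 (invmx B); have := frob_ge0 B; nra.
Qed.

(* the infimum of the Rayleigh quotient is an eigenvalue: [B - m] is positive semidefinite
   and, being coercive if invertible, would push the infimum above [m] *)
Lemma rayleigh_min_eigenvalue B lam : (0 < n)%N -> B^T = B ->
  (forall mu, eigenvalue B mu -> lam <= mu) -> forall c, lam * frob2 c <= mxdot c (B *m c).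
Proof.
move=> n_gt0 BT lam_min.
pose E : set R :=
  fun a => exists2 c : 'cV[R]_n, frob2 c != 0 & a = mxdot c (B *m c) / frob2 c.
have E_lb : lbound E (- frob B).
  move=> _ [c c_neq0 ->]; have c_gt0 : 0 < frob2 c by rewrite lt_def c_neq0 frob2_ge0.
  by rewrite ler_pdivlMr // mulNr; have := norm_mxdot_mul_le B c; rewrite ler_norml => /andP[].
have E_neq0 : nonempty E.
  pose one : 'cV[R]_n := const_mx 1.
  exists (mxdot one (B *m one) / frob2 one).
  by exists one => //; rewrite frob2_const1 pnatr_eq0 -lt0n.
pose m := inf E.
have m_le c : m * frob2 c <= mxdot c (B *m c).
  have [/frob2_eq0 ->|c_neq0] := eqVneq (frob2 c) 0.
    by rewrite mulmx0 mxdot0r frob2E mxdot0l mulr0.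
  have c_gt0 : 0 < frob2 c by rewrite lt_def c_neq0 frob2_ge0.
  by rewrite -ler_pdivlMr //; apply: ge_inf; [exists (- frob B) | exists c].
suff /lam_min le_lam_m : eigenvalue B m.
  by move=> c; apply: le_trans (m_le c); rewrite ler_wpM2r ?frob2_ge0.
pose D := B - m%:M.
have DE c : mxdot c (D *m c) = mxdot c (B *m c) - m * frob2 c.
  by rewrite mulmxBl mul_scalar_mx mxdotBr mxdotZr frob2E.
have DT : D^T = D by rewrite linearB /= BT tr_scalar_mx.
have D_ge0 c : 0 <= mxdot c (D *m c) by rewrite DE subr_ge0.
have /det0P[v v_neq0 vD] : \det D == 0.
  apply/negPn/negP; rewrite -unitfE -unitmxE => D_unit.
  have [K K_gt0 K_coer] := psd_unitmx_coercive DT D_ge0 D_unit.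
  have : m + K^-1 <= m; last by have := invr_gt0 K; rewrite K_gt0; lra.
  apply: lb_le_inf E_neq0 _ => _ [c c_neq0 ->].
  have c_gt0 : 0 < frob2 c by rewrite lt_def c_neq0 frob2_ge0.
  rewrite ler_pdivlMr //; have := K_coer c; rewrite DE => le_c.
  have : K^-1 * frob2 c <= K^-1 * (K * (mxdot c (B *m c) - m * frob2 c)).
    by rewrite ler_wpM2l // invr_ge0 ltW.
  by rewrite mulrA mulVf ?gt_eqF // mul1r; lra.
apply/eigenvalueP; exists v => //.
by apply/eqP; rewrite -subr_eq0 -mul_mx_scalar -mulmxBr -/D vD.
Qed.

Section LaplacianBounds.
Variables (B : 'M[R]_n) (lam : R).
Hypothesis n_gt0 : (0 < n)%N.
Hypothesis dsB : sym_doubly_stochastic B.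
Hypothesis lam_min : forall mu, eigenvalue B mu -> lam <= mu.

Lemma laplacian_form_le c : frob2 c - mxdot c (B *m c) <= (1 - lam) * frob2 c.
Proof.
by have := rayleigh_min_eigenvalue n_gt0 (let: And4 BT _ _ _ := dsB in BT) lam_min c; lra.
Qed.

Lemma frob2_laplacian_le c : frob2 (c - B *m c) <= (1 - lam) ^+ 2 * frob2 c.
Proof.
pose D := 1%:M - B.
have DE c' : D *m c' = c' - B *m c' by rewrite mulmxBl mul1mx.
have DT : D^T = D by case: dsB => BT _ _ _; rewrite linearB /= trmx1 BT.
have D_ge0 c' : 0 <= mxdot c' (D *m c').
  by rewrite DE mxdotBr -frob2E subr_ge0 mxdot_doubly_stochastic_le.
have D_le c' : mxdot c' (D *m c') <= (1 - lam) * frob2 c'.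
  by rewrite DE mxdotBr -frob2E laplacian_form_le.
have L_ge0 : 0 <= 1 - lam.
  have := D_le (const_mx 1); have := D_ge0 (const_mx 1); rewrite frob2_const1.
  have : (0 : R) < n%:R by rewrite ltr0n.
  nra.
rewrite -DE; apply: le_trans (frob2_mul_psd_le DT D_ge0 D_le c) _.
by rewrite expr2 -mulrA ler_wpM2l.
Qed.

End LaplacianBounds.

End DoublyStochastic.

Definition agent_col (R : realType) n d r (Y : 'I_n -> 'M[R]_(d, r)) p q : 'cV[R]_n :=
  \col_i Y i p q.

Lemma sum_frob2_agent_col (R : realType) n d r (Y : 'I_n -> 'M[R]_(d, r)) :
  \sum_(i < n) frob2 (Y i) = \sum_(p < d) \sum_(q < r) frob2 (agent_col Y p q).
Proof.
rewrite /frob2 exchange_big /=; apply: eq_bigr => p _.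
rewrite exchange_big /=; apply: eq_bigr => q _.
by apply: eq_bigr => i _; rewrite big_ord1 mxE.
Qed.

Section ConsensusGradient.
Variables (R : realType) (n d r : nat) (W : 'M[R]_n) (t : nat) (lam : R).
Hypothesis n_gt0 : (0 < n)%N.
Hypothesis dsW : sym_doubly_stochastic W.
Hypothesis lam_min : forall mu, eigenvalue (mxpow W t) mu -> lam <= mu.
Variables (x : 'I_n -> 'M[R]_(d, r)) (y : 'M[R]_(d, r)).
Hypothesis stx : forall i, stiefel (x i).

Let B := mxpow W t.
Let dsB : sym_doubly_stochastic B := mxpow_sym_doubly_stochastic t dsW.

Lemma agent_col_consensus p q :
  agent_col (fun i => x i - \sum_(j < n) B i j *: x j) p q
  = agent_col (fun i => x i - y) p q - B *m agent_col (fun i => x i - y) p q.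
Proof.
case: dsB => _ _ B_row _; apply/matrixP => i k; rewrite !mxE summxE.
under [X in _ = _ - X]eq_bigr do rewrite !mxE mulrBr.
rewrite sumrB -mulr_suml B_row mul1r opprB addrA subrK.
by congr (_ - _); apply: eq_bigr => j _; rewrite mxE.
Qed.

Lemma sum_frob2_grad_phi_le :
  \sum_(i < n) frob2 (grad_phi W t x i) <= (1 - lam) ^+ 2 * dist2 x y.
Proof.
apply: le_trans (_ : \sum_(i < n) frob2 (x i - \sum_(j < n) B i j *: x j) <= _).
  by apply: ler_sum => i _; exact: frob2_projT_le.
rewrite /dist2 !sum_frob2_agent_col mulr_sumr; apply: ler_sum => p _.
rewrite mulr_sumr; apply: ler_sum => q _.
by rewrite agent_col_consensus frob2_laplacian_le.
Qed.

Lemma sum_pairs_frob2_le :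
  \sum_(i < n) \sum_(j < n) B i j * frob2 (x i - x j) <= 2 * ((1 - lam) * dist2 x y).
Proof.
pose c p q := agent_col (fun i => x i - y) p q.
have pairsE i j : B i j * frob2 (x i - x j) =
    \sum_(p < d) \sum_(q < r) B i j * (c p q i 0 - c p q j 0) ^+ 2.
  rewrite /frob2 mulr_sumr; apply: eq_bigr => p _; rewrite mulr_sumr; apply: eq_bigr => q _.
  by rewrite !mxE opprB addrA subrK.
under eq_bigr do under eq_bigr do rewrite pairsE.
under eq_bigr do rewrite exchange_big /=.
rewrite exchange_big /= /dist2 sum_frob2_agent_col !mulr_sumr; apply: ler_sum => p _.
under eq_bigr do rewrite exchange_big /=.
rewrite exchange_big /= !mulr_sumr; apply: ler_sum => q _.
rewrite dirichlet_form // ler_pM2l //.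
by apply: laplacian_form_le.
Qed.

(* the normal components of the local gradients add up to [- 1/2 sum_i x_i S_i] with
   [S_i = sum_j B_ij (x_i - x_j)^T (x_i - x_j)], while their raw parts cancel *)
Lemma frob_sum_grad_phi_le : frob (\sum_(i < n) grad_phi W t x i) <= (1 - lam) * dist2 x y.
Proof.
case: dsB => _ B_ge0 B_row B_col.
pose v i := x i - \sum_(j < n) B i j *: x j.
pose S i := \sum_(j < n) B i j *: ((x i - x j)^T *m (x i - x j)).
have vE i : v i = \sum_(j < n) B i j *: (x i - x j).
  by under eq_bigr do rewrite scalerBr; rewrite sumrB -scaler_suml B_row scale1r.
have sum_v : \sum_(i < n) v i = 0.
  rewrite sumrB exchange_big /=.
  by under [X in _ - X]eq_bigr do rewrite -scaler_suml B_col scale1r; rewrite subrr.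
have SE i : (x i)^T *m v i + (v i)^T *m x i = S i.
  rewrite vE mulmx_sumr raddf_sum mulmx_suml -big_split /=; apply: eq_bigr => j _.
  by rewrite !linearZ /= -scalemxAl -scalerDr stiefel_gram_sub.
have -> : \sum_(i < n) grad_phi W t x i = - (2^-1 *: \sum_(i < n) x i *m S i).
  rewrite (eq_bigr (fun i => v i - 2^-1 *: (x i *m S i))) => [|i _].
    by rewrite sumrB sum_v sub0r scaler_sumr.
  by rewrite /grad_phi /projT -/(v i) SE.
rewrite frobN frobZ ger0_norm ?invr_ge0 ?ler0n //.
have frob_S i : frob (x i *m S i) <= \sum_(j < n) B i j * frob2 (x i - x j).
  rewrite frob_stiefel_mul // /S; apply: le_trans (frob_sum_le _) _; apply: ler_sum => j _.
  rewrite frobZ ger0_norm // ler_wpM2l //.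
  by apply: le_trans (frob_mul_le _ _) _; rewrite frob_tr -expr2 sqr_frob.
have := le_trans (frob_sum_le _) (ler_sum _ (fun i _ => frob_S i)).
by have := sum_pairs_frob2_le; lra.
Qed.

End ConsensusGradient.

Section RetractionStep.
Variables (R : realType) (n d r : nat) (W : 'M[R]_n) (t : nat) (lam : R).
Variables (Rt : 'M[R]_(d, r) -> 'M[R]_(d, r) -> 'M[R]_(d, r)) (M alpha beta : R).
Variables (x x' u : 'I_n -> 'M[R]_(d, r)) (y : 'M[R]_(d, r)).
Hypothesis n_gt0 : (0 < n)%N.
Hypothesis dsW : sym_doubly_stochastic W.
Hypothesis lam_min : forall mu, eigenvalue (mxpow W t) mu -> lam <= mu.
Hypothesis Rt_second_order : forall v xi, stiefel v -> tangent v xi ->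
  frob (Rt v xi - (v + xi)) <= M * frob2 xi.
Hypotheses (M_ge0 : 0 <= M) (M_alpha_le1 : M * alpha <= 1).
Hypotheses (alpha_ge0 : 0 <= alpha) (beta_ge0 : 0 <= beta).
Hypothesis stx : forall i, stiefel (x i).
Hypothesis tangent_u : forall i, tangent (x i) (u i).
Hypothesis x'E : forall i, x' i = Rt (x i) (- (alpha *: grad_phi W t x i) + beta *: u i).

Lemma frob_sum_step_le :
  frob (\sum_(i < n) x i - \sum_(i < n) x' i) <=
    (alpha * (1 - lam) + 2 * alpha * (1 - lam) ^+ 2) * dist2 x y
    + beta * frob (\sum_(i < n) u i) + 2 * M * beta ^+ 2 * \sum_(i < n) frob2 (u i).
Proof.
pose g i := grad_phi W t x i; pose xi i := - (alpha *: g i) + beta *: u i.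
pose e i := x' i - x i - xi i.
have frob_e i :
    frob (e i) <= M * (2 * alpha ^+ 2 * frob2 (g i) + 2 * beta ^+ 2 * frob2 (u i)).
  have txi : tangent (x i) (xi i).
    by apply: tangentD; [apply/tangentN/tangentZ/tangent_projT | apply/tangentZ].
  rewrite /e x'E -addrA -opprD; apply: le_trans (Rt_second_order (stx i) txi) _.
  rewrite ler_wpM2l //.
  by apply: le_trans (frob2D_le _ _) _; rewrite frob2N !frob2Z !mulrA.
rewrite -frobN opprB.
have -> : \sum_(i < n) x' i - \sum_(i < n) x i =
    - (alpha *: \sum_(i < n) g i) + beta *: \sum_(i < n) u i + \sum_(i < n) e i.
  rewrite -sumrB (eq_bigr (fun i => xi i + e i)) => [|i _]; last first.
    by rewrite /e [RHS]addrC subrK.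
  by rewrite big_split /= /xi big_split /= sumrN !scaler_sumr.
have sum_e : frob (\sum_(i < n) e i) <=
    M * (2 * alpha ^+ 2 * \sum_(i < n) frob2 (g i) + 2 * beta ^+ 2 * \sum_(i < n) frob2 (u i)).
  rewrite !mulr_sumr -big_split mulr_sumr; apply: le_trans (frob_sum_le _) _.
  exact: ler_sum.
have sum_g := frob_sum_grad_phi_le n_gt0 dsW lam_min y stx.
have sum_g2 := sum_frob2_grad_phi_le n_gt0 dsW lam_min y stx.
have g_term : alpha * frob (\sum_(i < n) g i) <= alpha * ((1 - lam) * dist2 x y).
  exact: ler_wpM2l.
have g2_term : M * alpha * (2 * alpha * \sum_(i < n) frob2 (g i))
    <= 2 * alpha * ((1 - lam) ^+ 2 * dist2 x y).
  have G2_ge0 : 0 <= \sum_(i < n) frob2 (g i) by apply: sumr_ge0 => i _; exact: frob2_ge0.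
  apply: le_trans (ler_wpM2r _ M_alpha_le1) _; first by rewrite !mulr_ge0.
  by rewrite mul1r ler_wpM2l ?mulr_ge0.
apply: le_trans (frobD_le _ _) _; apply: le_trans (lerD (frobD_le _ _) (lexx _)) _.
by rewrite frobN !frobZ !ger0_norm //; lra.
Qed.

End RetractionStep.

Lemma delta1_sqr_small (R : realType) r (delta1 delta2 : R) :
  (1 <= r)%N -> 0 <= delta1 ->
  delta1 <= (5 * Num.sqrt r%:R)^-1 * delta2 -> delta2 <= 6^-1 -> 2 * delta1 ^+ 2 < 1.
Proof.
move=> r_ge1 d1_ge0 d1_le d2_le.
have sqrt_r_ge1 : 1 <= Num.sqrt (r%:R : R).
  by rewrite -[X in X <= _]sqrtr1 ler_sqrt ?ler0n ?ler1n.
move: d1_le; rewrite ler_pdivlMl; nra.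
Qed.

Theorem mainTheorem1 (R : realType) (n d r : nat)
  (hn : (1 <= n)%N) (hr : (1 <= r)%N) (hrd : (r <= d)%N)
  (W : 'M[R]_n) (hW : sym_doubly_stochastic W) (t : nat) (ht : (1 <= t)%N)
  (Rt : 'M[R]_(d, r) -> 'M[R]_(d, r) -> 'M[R]_(d, r)) (hRt : retraction Rt)
  (M : R) (hM : 0 < M)
  (hRtM : forall x xi, stiefel x -> tangent x xi ->
            frob (Rt x xi - (x + xi)) <= M * frob2 xi)
  (delta1 delta2 : R) (hd1 : 0 < delta1) (hd2 : 0 < delta2)
  (hd12 : delta1 <= (5 * Num.sqrt (r%:R))^-1 * delta2)
  (hd2' : delta2 <= 6^-1)
  (lam : R) (hlam : min_eigenvalue (mxpow W t) lam)
  (xk xk1 u : 'I_n -> 'M[R]_(d, r)) (xbk xbk1 : 'M[R]_(d, r))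
  (alpha beta : R)
  (ha0 : 0 <= alpha) (ha1 : alpha <= M^-1) (hb : 0 <= beta)
  (hIAMk : is_IAM xk xbk) (hIAMk1 : is_IAM xk1 xbk1)
  (hNk : inN delta1 delta2 xk xbk) (hNk1 : inN1 delta1 xk1 xbk1)
  (hu : forall i, tangent (xk i) (u i))
  (hupd : forall i, xk1 i =
     Rt (xk i) (- (alpha *: grad_phi W t xk i) + beta *: u i)) :
  let Lt := Lconst lam in
  let uhat := (n%:R)^-1 *: \sum_(i < n) u i in
  frob (xbk - xbk1) <=
    (1 - 2 * delta1 ^+ 2)^-1 *
      ((2 * Lt ^+ 2 * alpha + Lt * alpha) / n%:R * dist2 xk xbk
       + beta * frob uhat
       + 2 * M * beta ^+ 2 / n%:R * \sum_(i < n) frob2 (u i)).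
Proof.
cbv zeta; rewrite /Lconst; set uhat := _ *: _.
have [[[stk D0_le] _] [stk1 D1_le]] := (hNk, hNk1); have [_ lam_min] := hlam.
have M_alpha_le1 : M * alpha <= 1 by rewrite -(mulfV (lt0r_neq0 hM)) ler_pM2l.
have n_gt0 : (0 : R) < n%:R by rewrite ltr0n.
have sum_uE : frob (\sum_(i < n) u i) = n%:R * frob uhat.
  by rewrite /uhat frobZ ger0_norm ?invr_ge0 ?ler0n // mulrA mulfV ?lt0r_neq0 // mul1r.
have := frob_IAM_sub_le hRt hM hRtM stk stk1 hIAMk hIAMk1.
have := frob_sum_step_le xbk hn hW lam_min hRtM (ltW hM) M_alpha_le1 ha0 hb stk hu hupd.
rewrite sum_uE.
have := delta1_sqr_small hr (ltW hd1) hd12 hd2'.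
set F := frob (xbk - xbk1); set E := (X in _ <= _^-1 * X) => delta1_small step IAM_step.
have nE : n%:R * E = (alpha * (1 - lam) + 2 * alpha * (1 - lam) ^+ 2) * dist2 xk xbk
    + beta * (n%:R * frob uhat) + 2 * M * beta ^+ 2 * \sum_(i < n) frob2 (u i).
  by rewrite /E; field; rewrite lt0r_neq0.
have F_ge0 : 0 <= F by exact: frob_ge0.
have F_le : F * (n%:R * (2 - delta1 ^+ 2))
    <= F * (2 * n%:R - 2^-1 * (dist2 xk xbk + dist2 xk1 xbk1)).
  by rewrite ler_wpM2l //; lra.
have : n%:R * (F * (2 - delta1 ^+ 2)) <= n%:R * (2 * E) by lra.
rewrite ler_pM2l // ler_pdivlMl => [F_le_E|]; last lra.
have : F * (1 - 2 * delta1 ^+ 2) <= F * (1 - 2^-1 * delta1 ^+ 2).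
  by rewrite ler_wpM2l //; have := sqr_ge0 delta1; lra.
lra.
Qed.
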